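(* Let $B$ be a nonzero real vector space, $\lfloor\cdot,\cdot\rfloor$ a symmetric bilinear form on $B$, $q(b):=\tfrac12\lfloor b,b\rfloor$, and let $A$ be a maximally $q$--positive subset of $B$. Then $\Phi_A$ is a BC--function and ${\cal P}_q(\Phi_A^@)={\cal P}_q(\Phi_A)=A$.
   Context: A subset $A\subset B$ is $q$--positive if $A\ne\emptyset$ and $q(b-c)\ge 0$ for all $b,c\in A$; it is maximally $q$--positive if it is $q$--positive and not properly contained in another $q$--positive set. $\Phi_A(b):=\sup_{a\in A}\big[\lfloor a,b\rfloor-q(a)\big]$ for $b\in B$. For a proper convex $f\colon B\to\,]{-}\infty,\infty]$, $f^@(c):=\sup_{b\in B}[\lfloor b,c\rfloor-f(b)]$. A BC--function is a proper convex $f$ with $f^@(b)\ge f(b)\ge q(b)$ for all $b\in B$. For $h\ge q$, ${\cal P}_q(h):=\{b\colon h(b)=q(b)\}$. *)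

From HB Require Import structures.
From mathcomp Require Import all_boot all_order all_algebra.
From mathcomp Require Import all_classical all_reals ereal.
Set Implicit Arguments. Unset Strict Implicit. Unset Printing Implicit Defensive.
Import Order.TTheory GRing.Theory Num.Theory.
Local Open Scope classical_set_scope.
Local Open Scope ring_scope.

Section Defs.
Context {R : realType} {B : lmodType R}.

Definition sym_bilinear (bf : B -> B -> R) : Prop :=
  (forall a b, bf a b = bf b a) /\
  (forall a (r : R) (x y : B), bf a (r *: x + y) = r * bf a x + bf a y).

Definition qform (bf : B -> B -> R) (b : B) : R := (bf b b) / 2.

Definition q_positive (bf : B -> B -> R) (A : set B) : Prop :=
  A !=set0 /\ (forall b c, A b -> A c -> 0 <= qform bf (b - c)).

Definition max_q_positive (bf : B -> B -> R) (A : set B) : Prop :=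
  q_positive bf A /\
  (forall A' : set B, q_positive bf A' -> A `<=` A' -> A' = A).

Definition PhiA (bf : B -> B -> R) (A : set B) (b : B) : \bar R :=
  ereal_sup [set ((bf a b - qform bf a)%:E) | a in A].

Definition fenchel (bf : B -> B -> R) (f : B -> \bar R) (c : B) : \bar R :=
  ereal_sup [set ((bf b c)%:E - f b)%E | b in [set: B]].

Definition proper_fun (f : B -> \bar R) : Prop :=
  (forall b, f b != -oo%E) /\ (exists b, f b != +oo%E).

Definition convex_fun (f : B -> \bar R) : Prop :=
  forall (x y : B) (t : R), 0 < t -> t < 1 ->
    let z := t *: x + (1 - t) *: y in
    (f z <= t%:E * f x + (1 - t)%:E * f y)%E.

Definition BC_function (bf : B -> B -> R) (f : B -> \bar R) : Prop :=
  proper_fun f /\ convex_fun f /\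
  (forall b, (fenchel bf f b >= f b)%E /\ (f b >= (qform bf b)%:E)%E).

Definition Pq (bf : B -> B -> R) (h : B -> \bar R) : set B :=
  [set b | h b = (qform bf b)%:E].

End Defs.

From HB Require Import structures.
From mathcomp Require Import all_boot all_order all_algebra.
From mathcomp Require Import all_classical all_reals ereal.
From mathcomp Require Import lra.
Import Order.TTheory GRing.Theory Num.Theory.
Local Open Scope classical_set_scope.
Local Open Scope ring_scope.

(* [Phi_A] is a supremum of affine functions, hence convex, and the identity
   [q (b - a) = q b - <a,b> + q a] turns q-positivity of [A] into [Phi_A = q]
   on [A].  If [Phi_A b <= q b], then [q (b - a) >= 0] for every [a] in [A],
   so [A u {b}] is q-positive and maximality forces [b \in A]; hence
   [Phi_A >= q] with equality exactly on [A].  Finally [Phi_A^@ >= Phi_A]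
   because the affine minorants of [Phi_A] are among those defining
   [Phi_A^@] (using [Phi_A a = q a]), while [Phi_A^@ a <= q a] on [A] by the
   Fenchel-Young inequality [<a,b> - Phi_A b <= q a]. *)

Section SymBilinear.
Variables (R : realType) (B : lmodType R) (bf : B -> B -> R).
Hypothesis bf_sym : sym_bilinear bf.

Lemma bfC a b : bf a b = bf b a.
Proof. by case: bf_sym. Qed.

Lemma bfr0 a : bf a 0 = 0.
Proof. by have := bf_sym.2 a 1 0 0; rewrite scaler0 addr0 mul1r => h; lra. Qed.

Lemma bfDr a x y : bf a (x + y) = bf a x + bf a y.
Proof. by have := bf_sym.2 a 1 x y; rewrite scale1r mul1r. Qed.

Lemma bfZr a r x : bf a (r *: x) = r * bf a x.
Proof. by have := bf_sym.2 a r x 0; rewrite addr0 bfr0 addr0. Qed.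

Lemma bfNr a x : bf a (- x) = - bf a x.
Proof. by rewrite -scaleN1r bfZr mulN1r. Qed.

Lemma qform0 : qform bf 0 = 0.
Proof. by rewrite /qform bfr0 mul0r. Qed.

Lemma qformB b a : qform bf (b - a) = qform bf b - bf a b + qform bf a.
Proof.
have bfB x : bf (b - a) x = bf b x - bf a x by rewrite bfC bfDr bfNr !(bfC x).
by rewrite /qform bfDr bfNr !bfB (bfC b a); lra.
Qed.

Lemma qformBC x y : qform bf (x - y) = qform bf (y - x).
Proof. by rewrite !qformB bfC; lra. Qed.

End SymBilinear.

Arguments bfC {R B bf}.
Arguments bfDr {R B bf}.
Arguments bfZr {R B bf}.
Arguments qform0 {R B bf}.
Arguments qformB {R B bf}.
Arguments qformBC {R B bf}.

Section PhiA.
Variables (R : realType) (B : lmodType R) (bf : B -> B -> R) (A : set B).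

Local Notation q := (qform bf).
Local Notation Phi := (PhiA bf A).

Lemma PhiA_ub a b : A a -> ((bf a b - q a)%:E <= Phi b)%E.
Proof. by move=> Aa; apply: ereal_sup_ubound; exists a. Qed.

Hypothesis A_neq0 : A !=set0.
Hypothesis bf_sym : sym_bilinear bf.

Lemma PhiA_neq_ninfty b : Phi b != -oo%E.
Proof. by case: A_neq0 => a Aa; have := PhiA_ub a b Aa; case: (Phi b). Qed.

Lemma PhiA_convex : convex_fun Phi.
Proof.
move=> x y t t_gt0 t_lt1 /=.
have t1_gt0 : 0 < 1 - t by lra.
have := PhiA_neq_ninfty x; have := PhiA_neq_ninfty y.
case: (Phi x) (@PhiA_ub ^~ x) => [r| |] // ubx;
  case: (Phi y) (@PhiA_ub ^~ y) => [s| |] // uby _ _.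
- apply: ge_ereal_sup => _ [a Aa <-].
  have := ubx a Aa; have := uby a Aa; rewrite !lee_fin => hy hx.
  have := ler_wpM2l (ltW t_gt0) hx; have := ler_wpM2l (ltW t1_gt0) hy.
  by rewrite (bfDr bf_sym) !(bfZr bf_sym); nra.
- by rewrite (mulry (1 - t)) gtr0_sg // mul1e -EFinM addey // leey.
- by rewrite (mulry t) gtr0_sg // mul1e -EFinM addye // leey.
- by rewrite (mulry t) (mulry (1 - t)) !gtr0_sg // !mul1e addey // leey.
Qed.

Lemma fenchel_PhiA_le a : A a -> (fenchel bf Phi a <= (q a)%:E)%E.
Proof.
move=> Aa; apply: ge_ereal_sup => _ [b _ <-].
have := PhiA_ub a b Aa; case: (Phi b) => [r| |] //= => [|_]; last exact: leNye.
by rewrite !lee_fin (bfC bf_sym); lra.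
Qed.

Lemma PhiA_qform a : q_positive bf A -> A a -> Phi a = (q a)%:E.
Proof.
move=> [_ Apos] Aa; apply/eqP; rewrite eq_le; apply/andP; split.
  apply: ge_ereal_sup => _ [a' Aa' <-]; rewrite lee_fin.
  by have := Apos a a' Aa Aa'; rewrite (qformB bf_sym); lra.
suff <- : bf a a - q a = q a by exact: PhiA_ub.
by rewrite /qform; lra.
Qed.

Lemma PhiA_le_fenchel c : q_positive bf A -> (Phi c <= fenchel bf Phi c)%E.
Proof.
move=> Aqpos; apply: ge_ereal_sup => _ [a Aa <-].
rewrite EFinB -(PhiA_qform _ Aqpos Aa).
by apply: ereal_sup_ubound; exists a.
Qed.

Hypothesis A_max : max_q_positive bf A.

Lemma PhiA_le_qform_mem b : (Phi b <= (q b)%:E)%E -> A b.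
Proof.
move=> Phib_le; have [[a0 Aa0] Apos] := A_max.1.
have qB_ge0 a : A a -> 0 <= q (b - a).
  move=> Aa; have := le_trans (PhiA_ub a b Aa) Phib_le.
  by rewrite lee_fin (qformB bf_sym); lra.
have Ab_qpos : q_positive bf (A `|` [set b]).
  split; first by exists a0; left.
  move=> x y [Ax|->] [Ay|->]; [exact: Apos | | exact: qB_ge0 |].
  - by rewrite (qformBC bf_sym); apply: qB_ge0.
  - by rewrite subrr qform0.
by rewrite -(A_max.2 _ Ab_qpos (fun z Az => or_introl Az)); right.
Qed.

Lemma qform_le_PhiA b : ((q b)%:E <= Phi b)%E.
Proof.
case: (leP (Phi b) (q b)%:E) => [Phib_le|]; last exact: ltW.
by rewrite PhiA_qform //; [exact: A_max.1 | exact: PhiA_le_qform_mem].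
Qed.

End PhiA.

Arguments PhiA_ub {R B bf A}.
Arguments PhiA_neq_ninfty {R B bf A}.
Arguments PhiA_convex {R B bf A}.
Arguments fenchel_PhiA_le {R B bf A}.
Arguments PhiA_qform {R B bf A}.
Arguments PhiA_le_fenchel {R B bf A}.
Arguments PhiA_le_qform_mem {R B bf A}.
Arguments qform_le_PhiA {R B bf A}.

Section MaxQPositive.
Variables (R : realType) (B : lmodType R) (bf : B -> B -> R) (A : set B).
Hypotheses (bf_sym : sym_bilinear bf) (A_max : max_q_positive bf A).

Local Notation Phi := (PhiA bf A).

Lemma PhiA_BC : BC_function bf Phi.
Proof.
have [[a0 Aa0] _] := A_max.1.
split; [split | split].
- exact: PhiA_neq_ninfty A_max.1.1.
- by exists a0; rewrite (PhiA_qform bf_sym _ A_max.1 Aa0).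
- exact: PhiA_convex A_max.1.1 bf_sym.
- move=> b; split; first exact: PhiA_le_fenchel bf_sym b A_max.1.
  exact: qform_le_PhiA bf_sym A_max b.
Qed.

Lemma Pq_PhiA : Pq bf Phi = A.
Proof.
apply/seteqP; split => b /= => [Phib|Ab].
  by apply: (PhiA_le_qform_mem bf_sym A_max); rewrite Phib.
exact: PhiA_qform bf_sym _ A_max.1 Ab.
Qed.

Lemma Pq_fenchel_PhiA : Pq bf (fenchel bf Phi) = A.
Proof.
apply/seteqP; split => b /= => [Fb|Ab].
  apply: (PhiA_le_qform_mem bf_sym A_max); rewrite -Fb.
  exact: PhiA_le_fenchel bf_sym b A_max.1.
apply/eqP; rewrite eq_le (fenchel_PhiA_le bf_sym _ Ab) /=.
exact: le_trans (qform_le_PhiA bf_sym A_max b) (PhiA_le_fenchel bf_sym b A_max.1).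
Qed.

End MaxQPositive.

Arguments PhiA_BC {R B bf A}.
Arguments Pq_PhiA {R B bf A}.
Arguments Pq_fenchel_PhiA {R B bf A}.

Theorem theorem3p11 (R : realType) (B : lmodType R) (bf : B -> B -> R)
  (A : set B) :
  (exists b : B, b != 0) ->
  sym_bilinear bf ->
  max_q_positive bf A ->
  BC_function bf (PhiA bf A) /\
  Pq bf (fenchel bf (PhiA bf A)) = A /\
  Pq bf (PhiA bf A) = A.
Proof.
move=> _ bf_sym A_max.
split; first exact: PhiA_BC bf_sym A_max.
split; first exact: Pq_fenchel_PhiA bf_sym A_max.
exact: Pq_PhiA bf_sym A_max.
Qed.
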